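(* Let $\mathcal{C}$ be a fibre-symmetric coherent configuration with two fibres that admits matrices $E^{ij}_r$ satisfying (B1)–(B4). Suppose $\mathcal{C}$ has type $\begin{pmatrix}t+1&t\\&t+1\end{pmatrix}$ for some positive integer $t$, i.e. $t_{11}=t_{22}=t_{12}=t$. Then, setting $\beta$, $\gamma$ to be the two fibres, $X_i=A^{11}_i$ ($0\le i\le t$), $Y_i=A^{22}_i$ ($0\le i\le t$) and $N_h=A^{12}_h$ ($1\le h\le t$), $\mathcal{C}$ is a bipartite coherent configuration.
   Context: Coherent configuration with $f$ fibres: positive integers $x_i$, $t_{ij}$ ($1\le i,j\le f$), $\epsilon_{ij}=1-\delta_{ij}$, $x_i\times x_j$ $0/1$-matrices $A^{ij}_r$ ($\epsilon_{ij}\le r\le t_{ij}$), and $\hat A^{ij}_r$ the $f\times f$ block matrix whose only nonzero block is the $(i,j)$ block equal to $A^{ij}_r$; $\mathcal{C}=\{\hat A^{ij}_r\}$ satisfies $A^{ii}_0=I_{x_i}$, $\sum_{r=\epsilon_{ij}}^{t_{ij}}A^{ij}_r=J_{x_i,x_j}$, closure under transpose, and $\hat A^{ij}_r\hat A^{jh}_s\in\mathrm{Span}(\mathcal{C})$. Fibre-symmetric: $(A^{ii}_r)^T=A^{ii}_r$ for all $i$ and $0\le r\le t_{ii}$. The type of a two-fibre configuration is the symmetric matrix recording the number of matrices in each block: $t_{11}+1$, $t_{12}$, $t_{22}+1$. With $\tilde t_{ij}=t_{ij}-\epsilon_{ij}$, conditions on $x_i\times x_j$ matrices $E^{ij}_r$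 ($0\le r\le\tilde t_{ij}$): (B1) $E^{ij}_0=\frac{1}{\sqrt{x_ix_j}}J_{x_i,x_j}$; (B2) $\{E^{ij}_r\}_r$ is a basis of $\mathrm{Span}\{A^{ij}_r\}_r$; (B3) $(E^{ij}_r)^T=E^{ji}_r$; (B4) $E^{ij}_rE^{j'h}_s=\delta_{j,j'}\delta_{r,s}E^{ih}_r$. Bipartite coherent configuration: finite sets $\beta,\gamma$, positive integers $t_\beta,t_\gamma,t_{\beta\gamma}$, $0/1$-matrices $X_0,\dots,X_{t_\beta}$ ($|\beta|\times|\beta|$), $Y_0,\dots,Y_{t_\gamma}$ ($|\gamma|\times|\gamma|$), $N_1,\dots,N_{t_{\beta\gamma}}$ ($|\beta|\times|\gamma|$); $\mathcal{C}$ is the set of block matrices $\begin{pmatrix}X_i&0\\0&0\end{pmatrix}$, $\begin{pmatrix}0&0\\0&Y_j\end{pmatrix}$, $\begin{pmatrix}0&N_h\\0&0\end{pmatrix}$, $\begin{pmatrix}0&0\\N_h^T&0\end{pmatrix}$, satisfying: (C1) $X_0=I$, $Y_0=I$; (C2) the elements of $\mathcal{C}$ sum to $J$; (C3) closure under transpose; (C4) $M_1M_2\in\mathrm{Span}(\mathcal{C})$ for $M_1,M_2\in\mathcal{C}$; (C5) $N_iN_j^T=N_jN_i^T$ and $N_i^TN_j=N_j^TN_i$ for all $i,j$; (C6) $\{N_iN_j^T\}\cup\{I\}$ spans $\mathrm{Span}\{X_i\}$ and $\{N_i^TN_j\}\cup\{I\}$ spans $\mathrm{Span}\{Y_i\}$.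 *)

From HB Require Import structures.
From mathcomp Require Import all_boot all_order all_algebra.
From mathcomp Require Import reals.
Set Implicit Arguments. Unset Strict Implicit. Unset Printing Implicit Defensive.
Import Order.TTheory GRing.Theory Num.Theory.
Local Open Scope ring_scope.

(* Fibres are indexed by bool:  true = fibre 1 (beta),  false = fibre 2 (gamma). *)

Section Defs.
Variable R : realType.

Definition is01 m n (M : 'M[R]_(m, n)) : Prop :=
  forall a b, M a b = 0 \/ M a b = 1.

Definition Jmx m n : 'M[R]_(m, n) := const_mx 1.

Definition eps (i j : bool) : nat := (i != j).

Definition hat (x : bool -> nat) (i j : bool) :
    'M[R]_(x i, x j) -> 'M[R]_(x true + x false) :=
  match i, j return 'M[R]_(x i, x j) -> 'M[R]_(x true + x false) with
  | true, true => fun M => block_mx M 0 0 0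
  | true, false => fun M => block_mx 0 M 0 0
  | false, true => fun M => block_mx 0 0 M 0
  | false, false => fun M => block_mx 0 0 0 M
  end.

Definition fibres : seq bool := [:: true; false].

Definition rng (t : bool -> bool -> nat) (i j : bool) : seq nat :=
  iota (eps i j) (t i j - eps i j).+1.

Definition Cseq (x : bool -> nat) (t : bool -> bool -> nat)
    (A : forall i j : bool, nat -> 'M[R]_(x i, x j)) : seq 'M[R]_(x true + x false) :=
  flatten [seq flatten [seq [seq hat (A i j r) | r <- rng t i j] | j <- fibres]
          | i <- fibres].

Definition coherent2 (x : bool -> nat) (t : bool -> bool -> nat)
    (A : forall i j : bool, nat -> 'M[R]_(x i, x j)) : Prop :=
  (forall i, (0 < x i)%N) /\
  (forall i j, (0 < t i j)%N) /\
  (forall i j r, (eps i j <= r <= t i j)%N -> is01 (A i j r)) /\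
  (forall i, A i i 0%N = 1%:M) /\
  (forall i j, \sum_(r <- rng t i j) A i j r = Jmx (x i) (x j)) /\
  (forall M, M \in Cseq t A -> M^T \in Cseq t A) /\
  (forall i j h r s, (eps i j <= r <= t i j)%N -> (eps j h <= s <= t j h)%N ->
     hat (A i j r) *m hat (A j h s) \in span (Cseq t A)).

Definition fibre_symmetric (x : bool -> nat) (t : bool -> bool -> nat)
    (A : forall i j : bool, nat -> 'M[R]_(x i, x j)) : Prop :=
  forall i r, (r <= t i i)%N -> (A i i r)^T = A i i r.

Definition tt (t : bool -> bool -> nat) (i j : bool) : nat := t i j - eps i j.

Definition condB (x : bool -> nat) (t : bool -> bool -> nat)
    (A : forall i j : bool, nat -> 'M[R]_(x i, x j))
    (E : forall i j : bool, nat -> 'M[R]_(x i, x j)) : Prop :=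
      (forall i j, E i j 0%N = (Num.sqrt ((x i * x j)%N%:R))^-1 *: Jmx (x i) (x j)) /\
      (forall i j, basis_of (span [seq A i j r | r <- rng t i j])
                            [seq E i j r | r <- iota 0 (tt t i j).+1]) /\
      (forall i j r, (r <= tt t i j)%N -> (E i j r)^T = E j i r) /\
      (* B4 (case j = j') *)
      (forall i j h r s, (r <= tt t i j)%N -> (s <= tt t j h)%N ->
         (r = s -> (r <= tt t i h)%N /\ E i j r *m E j h s = E i h r) /\
         (r <> s -> E i j r *m E j h s = 0)).

Definition BCseq nb ng tb tg tbg (X : nat -> 'M[R]_nb) (Y : nat -> 'M[R]_ng)
    (N : nat -> 'M[R]_(nb, ng)) : seq 'M[R]_(nb + ng) :=
  [seq block_mx (X i) 0 0 0 | i <- iota 0 tb.+1] ++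
  [seq block_mx 0 0 0 (Y j) | j <- iota 0 tg.+1] ++
  [seq block_mx 0 (N h) 0 0 | h <- iota 1 tbg] ++
  [seq block_mx 0 0 (N h)^T 0 | h <- iota 1 tbg].

Definition bipartite_cc nb ng tb tg tbg (X : nat -> 'M[R]_nb) (Y : nat -> 'M[R]_ng)
    (N : nat -> 'M[R]_(nb, ng)) : Prop :=
  let C := BCseq tb tg tbg X Y N in
  ((0 < tb)%N /\ (0 < tg)%N /\ (0 < tbg)%N) /\
  ((forall i, (i <= tb)%N -> is01 (X i)) /\ (forall j, (j <= tg)%N -> is01 (Y j))
        /\ (forall h, (1 <= h <= tbg)%N -> is01 (N h))) /\
      (X 0%N = 1%:M /\ Y 0%N = 1%:M) /\
      (\sum_(M <- C) M = Jmx (nb + ng) (nb + ng)) /\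
      (forall M, M \in C -> M^T \in C) /\
      (forall M1 M2, M1 \in C -> M2 \in C -> M1 *m M2 \in span C) /\
      (forall i j, (1 <= i <= tbg)%N -> (1 <= j <= tbg)%N ->
                 N i *m (N j)^T = N j *m (N i)^T /\ (N i)^T *m N j = (N j)^T *m N i) /\
      (span (1%:M :: [seq N i *m (N j)^T | i <- iota 1 tbg, j <- iota 1 tbg])
                 = span [seq X i | i <- iota 0 tb.+1] /\
               span (1%:M :: [seq (N i)^T *m N j | i <- iota 1 tbg, j <- iota 1 tbg])
                 = span [seq Y i | i <- iota 0 tg.+1]).

End Defs.

From HB Require Import structures.
From mathcomp Require Import all_boot all_order all_algebra.
From mathcomp Require Import reals.
Set Implicit Arguments. Unset Strict Implicit. Unset Printing Implicit Defensive.
Import Order.TTheory GRing.Theory Num.Theory.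
Local Open Scope ring_scope.

(* Transposition maps the cells A^{12}_h bijectively onto the cells A^{21}_r,
   and a product of two cells lies in the span of the cells of the product
   block, so (C1)-(C4) are inherited from the coherent configuration.  A
   product N_i N_j^T lies in the span of the symmetric matrices A^{11}_r,
   which gives (C5).  For (C6), the E^{ii}_s are orthogonal idempotents
   spanning Span{A^{ii}_r}, hence they sum to the identity.  For s < t, the
   range of the off-diagonal index, (B3) and (B4) give
   E^{11}_s = E^{12}_s (E^{12}_s)^T, a combination of the N_i N_j^T, and the
   last idempotent is E^{11}_t = I - sum_{s<t} E^{11}_s. *)

Section MatrixFacts.
Variable K : fieldType.

Lemma linear_mem_span (U V : vectType K) (f : U -> V) (X : seq U)
    (S : {vspace V}) :
  linear f -> {in X, forall u, f u \in S} -> {in span X, forall u, f u \in S}.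
Proof.
move=> fL fX u /(coord_span (X := in_tuple X)) ->.
have f0 : f 0 = 0 by have := fL (-1) 0 0; rewrite scaler0 add0r scaleN1r addNr.
elim/big_rec: _ => [|i v _ fv]; first by rewrite f0 mem0v.
by rewrite fL memvD // memvZ // fX // mem_nth.
Qed.

Lemma bilinear_mem_span (U V W : vectType K) (m : U -> V -> W)
    (X : seq U) (Z : seq V) (S : {vspace W}) :
  (forall v, linear (m^~ v)) -> (forall u, linear (m u)) ->
  {in X & Z, forall u v, m u v \in S} ->
  {in span X & span Z, forall u v, m u v \in S}.
Proof.
move=> mL mR mXZ u v uX vZ.
apply: (linear_mem_span (mR u) _ vZ) => z zZ.
by apply: (linear_mem_span (mL z) _ uX) => y yX; apply: mXZ.
Qed.

Lemma free_of_span_basis (V : vectType K) (X Y : seq V) :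
  basis_of (span X) Y -> size Y = size X -> free X.
Proof.
by move=> bY sYX; rewrite /free -sYX -(size_basis (X := in_tuple Y) bY).
Qed.

Lemma span_trmx_sym n (X : seq 'M[K]_n) :
  {in X, forall M, M^T = M} -> {in span X, forall M, M^T = M}.
Proof.
move=> Xsym M XM; apply/eqP; rewrite -subr_eq0 -memv0.
apply: (linear_mem_span (f := fun M => M^T - M)) XM => [a u v|N /Xsym ->].
  by rewrite linearP /= scalerBr opprD addrACA.
by rewrite subrr mem0v.
Qed.

(* Left multiplication by [P] fixes every [E s], hence their span, hence [1]. *)
Lemma sum_idempotents_eq1 n m (E : nat -> 'M[K]_n) :
  (forall r s, (r <= m)%N -> (s <= m)%N ->
     E r *m E s = if r == s then E s else 0) ->
  1%:M \in span (mkseq E m.+1) -> \sum_(r < m.+1) E r = 1%:M.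
Proof.
move=> Emul E1; set P := \sum_(r < m.+1) E r.
have PE : {in mkseq E m.+1, forall M, P *m M - M \in 0%VS}.
  move=> M /mapP[s]; rewrite mem_iota /= => hs ->.
  rewrite mulmx_suml (bigD1 (Ordinal hs)) //= Emul ?eqxx //.
  rewrite big1 ?addr0 ?subrr ?mem0v //.
  by move=> r; rewrite -val_eqE /= => /negbTE rs; rewrite Emul ?rs // -ltnS.
have := linear_mem_span (f := fun M => P *m M - M) _ PE E1.
rewrite memv0 mulmx1 subr_eq0 => /(_ _)/eqP; apply.
by move=> a u v; rewrite mulmxDr -scalemxAr scalerBr opprD addrACA.
Qed.

Lemma sum_block_mx m1 m2 n1 n2 I (s : seq I)
    (a : I -> 'M[K]_(m1, n1)) (b : I -> 'M[K]_(m1, n2))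
    (c : I -> 'M[K]_(m2, n1)) (d : I -> 'M[K]_(m2, n2)) :
  \sum_(i <- s) block_mx (a i) (b i) (c i) (d i) =
  block_mx (\sum_(i <- s) a i) (\sum_(i <- s) b i)
           (\sum_(i <- s) c i) (\sum_(i <- s) d i).
Proof.
elim: s => [|i s IH]; first by rewrite !big_nil block_mx0.
by rewrite !big_cons IH add_block_mx.
Qed.

End MatrixFacts.

Lemma sum_BCseq (R : realType) nb ng tb tg tbg (X : nat -> 'M[R]_nb)
    (Y : nat -> 'M[R]_ng) (N : nat -> 'M[R]_(nb, ng)) :
  \sum_(M <- BCseq tb tg tbg X Y N) M =
  block_mx (\sum_(i <- iota 0 tb.+1) X i) (\sum_(h <- iota 1 tbg) N h)
           (\sum_(h <- iota 1 tbg) (N h)^T) (\sum_(j <- iota 0 tg.+1) Y j).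
Proof.
rewrite /BCseq !big_cat !big_map !sum_block_mx !big1_eq /= !add_block_mx.
by rewrite !addr0 !add0r.
Qed.

Section TwoFibres.
Variables (R : realType) (x : bool -> nat) (t : bool -> bool -> nat).
Variables (A E : forall i j : bool, nat -> 'M[R]_(x i, x j)).

Local Notation Aseq i j := [seq A i j r | r <- rng t i j].

Lemma Cseq_hat i j r : r \in rng t i j -> hat (A i j r) \in Cseq t A.
Proof.
move=> hr; apply/flatten_mapP; exists i; first by case: (i).
by apply/flatten_mapP; exists j; [case: (j) | apply/mapP; exists r].
Qed.

Lemma CseqP M :
  M \in Cseq t A -> exists i j r, r \in rng t i j /\ M = hat (A i j r).
Proof.
by case/flatten_mapP=> i _ /flatten_mapP[j _ /mapP[r hr ->]]; exists i, j, r.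
Qed.

Lemma trmx_hat i j (M : 'M[R]_(x i, x j)) : (hat M)^T = hat M^T.
Proof. by case: i j M => [] [] M /=; rewrite tr_block_mx !trmx0. Qed.

Lemma mulmx_hat i j h (M : 'M[R]_(x i, x j)) (N : 'M[R]_(x j, x h)) :
  hat M *m hat N = hat (M *m N).
Proof.
by case: i j h M N => [] [] [] M N /=;
  rewrite mulmx_block !mulmx0 !mul0mx !addr0 ?add0r.
Qed.

Lemma mulmx_hat_neq i j j' h (M : 'M[R]_(x i, x j)) (N : 'M[R]_(x j', x h)) :
  j != j' -> hat M *m hat N = 0.
Proof.
by case: i j j' h M N => [] [] [] [] M N //= _;
  rewrite mulmx_block !mulmx0 !mul0mx !addr0 block_mx0.
Qed.

Definition blk (i j : bool) : 'M[R]_(x true + x false) -> 'M[R]_(x i, x j) :=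
  match i, j with
  | true, true => @ulsubmx _ _ _ _ _
  | true, false => @ursubmx _ _ _ _ _
  | false, true => @dlsubmx _ _ _ _ _
  | false, false => @drsubmx _ _ _ _ _
  end.

Lemma blk_hat i j (M : 'M[R]_(x i, x j)) : blk i j (hat M) = M.
Proof.
by case: i j M => [] [] M /=;
  rewrite ?block_mxKul ?block_mxKur ?block_mxKdl ?block_mxKdr.
Qed.

Lemma linear_blk i j : linear (blk i j).
Proof.
by case: i j => [] [] a u v;
  rewrite /blk /ulsubmx /ursubmx /dlsubmx /drsubmx !linearP.
Qed.

Lemma blk_span_Cseq i j :
  {in span (Cseq t A), forall M, blk i j M \in span (Aseq i j)}.
Proof.
apply: (linear_mem_span (linear_blk i j)) => _ /CseqP[i' [j' [r [hr ->]]]].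
case: i j i' j' hr => [] [] [] [] hr; cbn [hat blk];
  by rewrite ?block_mxKul ?block_mxKur ?block_mxKdl ?block_mxKdr
             ?mem0v ?memv_span ?map_f.
Qed.

Hypothesis t_gt0 : forall i j, (0 < t i j)%N.
Hypothesis A_free : forall i j, free (Aseq i j).
Hypothesis Cseq_tr : forall M, M \in Cseq t A -> M^T \in Cseq t A.
Hypothesis hat_mul_span : forall i j h r s,
  (eps i j <= r <= t i j)%N -> (eps j h <= s <= t j h)%N ->
  hat (A i j r) *m hat (A j h s) \in span (Cseq t A).

Lemma mem_rng i j r : (r \in rng t i j) = (eps i j <= r <= t i j)%N.
Proof.
by rewrite mem_iota addnS subnKC ?ltnS // (leq_trans _ (t_gt0 i j)) ?leq_b1.
Qed.

Lemma A_neq0 i j r : r \in rng t i j -> A i j r != 0.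
Proof. by move=> hr; apply: free_not0 (A_free i j) _; apply: map_f. Qed.

Lemma Cseq_mul_span M1 M2 :
  M1 \in Cseq t A -> M2 \in Cseq t A -> M1 *m M2 \in span (Cseq t A).
Proof.
move=> /CseqP[i [j [r [hr ->]]]] /CseqP[j' [h [s [hs ->]]]].
have [ejj'|jj'] := eqVneq j j'; last by rewrite mulmx_hat_neq ?mem0v.
by subst j'; apply: hat_mul_span; rewrite -mem_rng.
Qed.

Lemma A_mul_span i j h r s :
  r \in rng t i j -> s \in rng t j h -> A i j r *m A j h s \in span (Aseq i h).
Proof.
move=> hr hs; rewrite -[A i j r *m _]blk_hat -mulmx_hat.
by apply: blk_span_Cseq; apply: hat_mul_span; rewrite -mem_rng.
Qed.

Lemma trmx_A_mem i j r : r \in rng t i j -> (A i j r)^T \in Aseq j i.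
Proof.
move=> hr; have := A_neq0 hr; rewrite -trmx_eq0.
have /CseqP[i' [j' [s [hs]]]] := Cseq_tr (Cseq_hat hr).
rewrite trmx_hat.
case: i j i' j' {hr} hs (A i j r)^T => [] [] [] [] hs M; cbn [hat];
  by move=> /eq_block_mx[? ? ? ?]; subst M; rewrite ?eqxx // => _; apply: map_f.
Qed.

Lemma A_mul_tr_span i j h r s :
  r \in rng t i j -> s \in rng t h j ->
  A i j r *m (A h j s)^T \in span (Aseq i h).
Proof. by move=> hr /trmx_A_mem/mapP[s' hs' ->]; apply: A_mul_span. Qed.

Lemma A_tr_mul_span i j h r s :
  r \in rng t j i -> s \in rng t j h ->
  (A j i r)^T *m A j h s \in span (Aseq i h).
Proof. by move=> /trmx_A_mem/mapP[r' hr' ->] hs; apply: A_mul_span. Qed.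

Lemma tt_sym i j : tt t i j = tt t j i.
Proof.
suff tt_le i' j' : (tt t i' j' <= tt t j' i')%N by apply/anti_leq; rewrite !tt_le.
have uniq_tr : uniq [seq (A i' j' r)^T | r <- rng t i' j'].
  by rewrite (map_comp trmx (A i' j')) (map_inj_uniq trmx_inj) free_uniq.
have tr_sub : {subset [seq (A i' j' r)^T | r <- rng t i' j'] <= Aseq j' i'}.
  by move=> _ /mapP[r hr ->]; apply: trmx_A_mem.
have := uniq_leq_size uniq_tr tr_sub.
by rewrite !size_map !size_iota.
Qed.

Hypothesis A0 : forall i, A i i 0%N = 1%:M.
Hypothesis A_sym : forall i r, (r <= t i i)%N -> (A i i r)^T = A i i r.

Lemma mem_rng_diag0 i : 0%N \in rng t i i.
Proof. by rewrite mem_rng /eps eqxx. Qed.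

Lemma span_diag_sym i : {in span (Aseq i i), forall M, M^T = M}.
Proof.
by apply: span_trmx_sym => _ /mapP[r /[!mem_rng]/andP[_ hr] ->]; apply: A_sym.
Qed.

Lemma A_mul_tr_sym i j r s : r \in rng t i j -> s \in rng t i j ->
  A i j r *m (A i j s)^T = A i j s *m (A i j r)^T.
Proof.
by move=> hr hs; rewrite -[LHS]span_diag_sym ?trmx_mul ?trmxK // A_mul_tr_span.
Qed.

Lemma A_tr_mul_sym i j r s : r \in rng t j i -> s \in rng t j i ->
  (A j i r)^T *m A j i s = (A j i s)^T *m A j i r.
Proof.
by move=> hr hs; rewrite -[LHS]span_diag_sym ?trmx_mul ?trmxK // A_tr_mul_span.
Qed.

Hypothesis E_span : forall i j,
  span [seq E i j r | r <- iota 0 (tt t i j).+1] = span (Aseq i j).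
Hypothesis E_tr : forall i j r, (r <= tt t i j)%N -> (E i j r)^T = E j i r.
Hypothesis E_mul : forall i j h r s, (r <= tt t i j)%N -> (s <= tt t j h)%N ->
  (r = s -> (r <= tt t i h)%N /\ E i j r *m E j h s = E i h r) /\
  (r <> s -> E i j r *m E j h s = 0).

Lemma E_mem_span i j s : (s <= tt t i j)%N -> E i j s \in span (Aseq i j).
Proof. by move=> hs; rewrite -E_span memv_span // map_f // mem_iota. Qed.

Lemma E_diag_factor i j s : (s <= tt t i j)%N -> E i i s = E i j s *m (E i j s)^T.
Proof.
move=> hs; have hs' : (s <= tt t j i)%N by rewrite -tt_sym.
by rewrite E_tr // ((E_mul hs hs').1 erefl).2.
Qed.

Lemma sum_E_diag i : \sum_(r < (tt t i i).+1) E i i r = 1%:M.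
Proof.
apply: sum_idempotents_eq1 => [r s hr hs|].
  have [rs|/eqP rs] := eqVneq r s; last exact: (E_mul hr hs).2.
  by rewrite ((E_mul hr hs).1 rs).2 rs.
by rewrite /mkseq E_span -(A0 i) memv_span // map_f // mem_rng_diag0.
Qed.

Lemma diag_span_subv i (S : {vspace 'M[R]_(x i)}) :
  1%:M \in S -> (forall s, (s < tt t i i)%N -> E i i s \in S) ->
  (span (Aseq i i) <= S)%VS.
Proof.
move=> S1 SE; rewrite -E_span; apply/span_subvP => M /mapP[s].
rewrite mem_iota ltnS => /= hs ->; have [/SE //|hs'] := ltnP s (tt t i i).
have -> : s = tt t i i by apply/eqP; rewrite eqn_leq hs hs'.
have -> : E i i (tt t i i) = 1%:M - \sum_(r < tt t i i) E i i r.
  by rewrite -(sum_E_diag i) big_ord_recr /= [_ + E i i _]addrC addrK.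
by rewrite memvB // memv_suml // => r _; apply: SE.
Qed.

Lemma diag_span_eq i (S : seq 'M[R]_(x i)) :
  {subset S <= span (Aseq i i)} ->
  (forall s, (s < tt t i i)%N -> E i i s \in span (1%:M :: S)) ->
  span (1%:M :: S) = span (Aseq i i).
Proof.
move=> SA ES; apply/eqP.
rewrite eqEsubv diag_span_subv ?memv_span ?mem_head // andbT.
apply/span_subvP => _ /predU1P[->|/SA //].
by rewrite -(A0 i) memv_span // map_f // mem_rng_diag0.
Qed.

Section EqualValencies.
Variable tp : nat.
Hypotheses (tp_gt0 : (0 < tp)%N) (t_tt : t true true = tp).
Hypotheses (t_ff : t false false = tp) (t_tf : t true false = tp).

Local Notation N := (A true false).

Lemma rng_diag i : rng t i i = iota 0 tp.+1.
Proof. by rewrite /rng /eps eqxx subn0; case: i; rewrite ?t_tt ?t_ff. Qed.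

Lemma rng_tf : rng t true false = iota 1 tp.
Proof. by rewrite /rng t_tf -[eps _ _]/1%N subn1 (ltn_predK tp_gt0). Qed.

Lemma mem_rng_tf h : (h \in rng t true false) = (1 <= h <= tp)%N.
Proof. by rewrite mem_rng t_tf. Qed.

Lemma tt_diag i : tt t i i = tp.
Proof. by rewrite /tt /eps eqxx subn0; case: i. Qed.

Lemma tt_tf : tt t true false = tp.-1.
Proof. by rewrite /tt t_tf -[eps _ _]/1%N subn1. Qed.

Lemma BCseq_eq_Cseq : BCseq tp tp tp (A true true) (A false false) N =i Cseq t A.
Proof.
move=> M; apply/idP/idP.
  move=> MB; rewrite !mem_cat in MB; case/or4P: MB => /mapP[r hr ->].
  - by apply: (@Cseq_hat true true); rewrite rng_diag.
  - by apply: (@Cseq_hat false false); rewrite rng_diag.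
  - by apply: (@Cseq_hat true false); rewrite rng_tf.
  - by have := Cseq_tr (@Cseq_hat true false r _); rewrite trmx_hat rng_tf; apply.
move/CseqP=> [i [j [r [hr ->]]]]; rewrite !mem_cat.
case: i j hr => [] [] hr; cbn [hat].
- rewrite rng_diag in hr.
  by rewrite (map_f (fun r => block_mx (A true true r) 0 0 0)).
- rewrite rng_tf in hr.
  by rewrite (map_f (fun r => block_mx 0 (N r) 0 0)) ?orbT.
- have /mapP[h hh /(canRL trmxK) ->] := trmx_A_mem hr; rewrite rng_tf in hh.
  by rewrite (map_f (fun h => block_mx 0 0 (N h)^T 0)) ?orbT.
- rewrite rng_diag in hr.
  by rewrite (map_f (fun r => block_mx 0 0 0 (A false false r))) ?orbT.
Qed.

Hypothesis A_sum : forall i j, \sum_(r <- rng t i j) A i j r = Jmx R (x i) (x j).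

Lemma sum_BCseq_J :
  \sum_(M <- BCseq tp tp tp (A true true) (A false false) N) M = Jmx R _ _.
Proof.
have sum_diag i : \sum_(r <- iota 0 tp.+1) A i i r = Jmx R _ _.
  by rewrite -(rng_diag i) A_sum.
have sum_N : \sum_(h <- iota 1 tp) N h = Jmx R _ _.
  by rewrite -rng_tf; apply: A_sum.
have sum_Nt : \sum_(h <- iota 1 tp) (N h)^T = Jmx R _ _.
  by rewrite -linear_sum /= sum_N; apply: trmx_const.
by rewrite sum_BCseq !sum_diag sum_N sum_Nt; apply: block_mx_const.
Qed.

Lemma E_tf_mem_span s : (s < tp)%N -> E true false s \in span (map N (iota 1 tp)).
Proof.
by move=> hs; rewrite -rng_tf E_mem_span // tt_tf -ltnS (ltn_predK tp_gt0).
Qed.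

Lemma span_NNt :
  span (1%:M :: [seq N i *m (N j)^T | i <- iota 1 tp, j <- iota 1 tp]) =
  span [seq A true true i | i <- iota 0 tp.+1].
Proof.
rewrite -(rng_diag true); apply: diag_span_eq.
  move=> _ /allpairsP[[i j] [/= hi hj ->]].
  by apply: A_mul_tr_span; rewrite rng_tf.
move=> s; rewrite tt_diag => hs.
have hs' : (s <= tt t true false)%N by rewrite tt_tf -ltnS (ltn_predK tp_gt0).
rewrite (E_diag_factor hs').
have hE := E_tf_mem_span hs.
apply: (bilinear_mem_span (m := fun u v => u *m v^T) _ _ _ hE hE).
- by move=> v a u u'; rewrite mulmxDl scalemxAl.
- by move=> u a v v'; rewrite linearP /= mulmxDr scalemxAr.
- move=> _ _ /mapP[i hi ->] /mapP[j hj ->].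
  by rewrite memv_span // inE (allpairs_f (fun i j => N i *m (N j)^T)) ?orbT.
Qed.

Lemma span_NtN :
  span (1%:M :: [seq (N i)^T *m N j | i <- iota 1 tp, j <- iota 1 tp]) =
  span [seq A false false i | i <- iota 0 tp.+1].
Proof.
rewrite -(rng_diag false); apply: diag_span_eq.
  move=> _ /allpairsP[[i j] [/= hi hj ->]].
  by apply: A_tr_mul_span; rewrite rng_tf.
move=> s; rewrite tt_diag => hs.
have hs' : (s <= tt t true false)%N by rewrite tt_tf -ltnS (ltn_predK tp_gt0).
have hs'' : (s <= tt t false true)%N by rewrite tt_sym.
rewrite (E_diag_factor hs'') -(E_tr hs') trmxK.
have hE := E_tf_mem_span hs.
apply: (bilinear_mem_span (m := fun u v => u^T *m v) _ _ _ hE hE).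
- by move=> v a u u'; rewrite linearP /= mulmxDl scalemxAl.
- by move=> u a v v'; rewrite mulmxDr scalemxAr.
- move=> _ _ /mapP[i hi ->] /mapP[j hj ->].
  by rewrite memv_span // inE (allpairs_f (fun i j => (N i)^T *m N j)) ?orbT.
Qed.

End EqualValencies.

End TwoFibres.

Theorem lemma10p1 (R : realType) (x : bool -> nat) (t : bool -> bool -> nat)
    (A : forall i j : bool, nat -> 'M[R]_(x i, x j))
    (E : forall i j : bool, nat -> 'M[R]_(x i, x j)) (tp : nat) :
  coherent2 t A -> fibre_symmetric t A -> condB t A E ->
  (0 < tp)%N -> t true true = tp -> t false false = tp -> t true false = tp ->
  bipartite_cc tp tp tp (A true true) (A false false) (A true false) /\
  BCseq tp tp tp (A true true) (A false false) (A true false) =i Cseq t A.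
Proof.
move=> [_ [t_gt0 [A01 [A0 [A_sum [Cseq_tr hat_mul_span]]]]]] A_sym
  [_ [B2 [E_tr E_mul]]] tp_gt0 t_tt t_ff t_tf.
have A_free i j : free [seq A i j r | r <- rng t i j].
  by apply: free_of_span_basis (B2 i j) _; rewrite !size_map !size_iota.
have E_span i j : span [seq E i j r | r <- iota 0 (tt t i j).+1] =
                  span [seq A i j r | r <- rng t i j].
  by case/andP: (B2 i j) => /eqP.
have C_eq := BCseq_eq_Cseq A_free Cseq_tr tp_gt0 t_tt t_ff t_tf.
split; last exact: C_eq.
split; first by [].
split.
  split; [|split] => [i|i|h] hr; apply: A01; rewrite ?t_tt ?t_ff ?t_tf //.
split; first by split; apply: A0.
split; first exact: sum_BCseq_J tp_gt0 t_tt t_ff t_tf A_sum.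
split; first by move=> M; rewrite !C_eq; apply: Cseq_tr.
split; first by move=> M1 M2; rewrite !C_eq (eq_span C_eq); apply: Cseq_mul_span.
split.
  move=> i j; rewrite -!(mem_rng_tf t_gt0 t_tf) => hi hj.
  by split; [apply: A_mul_tr_sym | apply: A_tr_mul_sym].
by split; [apply: span_NNt | apply: span_NtN].
Qed.
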